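(* Let $X$ be a shift space such that $s_n(X)\le k$ for all $n\ge0$. Then the number of right asymptotic classes of $X$ is finite and at most $k$.
   Context: $A$ is a finite alphabet; a shift space is a closed shift-invariant subset $X\subseteq A^{\mathbb Z}$; $p_n(X)$ is the number of words of length $n$ occurring as factors of elements of $X$, and $s_n(X)=p_{n+1}(X)-p_n(X)$. For $x\in A^{\mathbb Z}$ write $x^+=x_0x_1\cdots$. Two elements $x,y\in X$ are right asymptotically equivalent if there are shifts $x'=\sigma^i(x)$, $y'=\sigma^j(y)$ with $x'^+=y'^+$ (i.e. they have a common tail). Each equivalence class is a union of orbits; the right asymptotic classes are the equivalence classes which contain more than one orbit. *)

From HB Require Import structures.
From mathcomp Require Import all_boot all_order all_algebra.
From Stdlib Require Import ClassicalEpsilon.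
Set Implicit Arguments. Unset Strict Implicit. Unset Printing Implicit Defensive.
Import Order.TTheory GRing.Theory Num.Theory.
Local Open Scope ring_scope.

Definition point (A : finType) := int -> A.

Definition subshift_pred (A : finType) := point A -> Prop.

Definition shift (A : finType) (x : point A) : point A := fun m => x (m + 1).

Definition shift_invariant (A : finType) (X : subshift_pred A) : Prop :=
  (forall x, X x -> X (shift x)) /\ (forall y, X y -> exists x, X x /\ shift x = y).

(* Closedness in the product topology: every point all of whose central
   windows [-n, n] agree with some point of X lies in X. *)
Definition closed_set (A : finType) (X : subshift_pred A) : Prop :=
  forall x : point A,
    (forall n : nat, exists y, X y /\
        forall m : int, - (n%:Z) <= m -> m <= n%:Z -> x m = y m) -> X x.

Definition is_shift_space (A : finType) (X : subshift_pred A) : Prop :=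
  closed_set X /\ shift_invariant X.

Definition occurs (A : finType) (X : subshift_pred A) (n : nat) (w : n.-tuple A) : Prop :=
  exists x, X x /\ exists i : int, forall j : 'I_n, tnth w j = x (i + (j : nat)%:Z).

Definition asbool (P : Prop) : bool :=
  if excluded_middle_informative P then true else false.

Definition complexity (A : finType) (X : subshift_pred A) (n : nat) : nat :=
  #|[set w : n.-tuple A | asbool (occurs X w)]|.

Definition right_asymptotic (A : finType) (x y : point A) : Prop :=
  exists i j : int, forall m : nat, x (i + m%:Z) = y (j + m%:Z).

Definition same_orbit (A : finType) (x y : point A) : Prop :=
  exists i : int, forall m : int, y m = x (m + i).

Definition class_has_several_orbits (A : finType) (X : subshift_pred A) (x : point A) : Prop :=
  exists y, X y /\ right_asymptotic x y /\ ~ same_orbit x y.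

From HB Require Import structures.
From mathcomp Require Import all_boot all_order all_algebra.
From mathcomp Require Import zify.
From Stdlib Require Import Classical ClassicalEpsilon.
Set Implicit Arguments. Unset Strict Implicit. Unset Printing Implicit Defensive.
Import Order.TTheory GRing.Theory Num.Theory.
Local Open Scope ring_scope.

(* If the right asymptotic classes of r_1, ..., r_m are distinct and each contains
   a second orbit, then for each i some point y_i shares a right tail with r_i but
   differs from it just before that tail.  For N large the length-N prefixes w_i of
   these tails are pairwise distinct, and each w_i has two distinct left extensions
   in the language.  Since every word of length N has at least one, counting
   words of length N+1 by their last N letters gives p_(N+1) >= p_N + m, so m <= k. *)

Lemma card_behead_add_left_special (A : finType) (n m : nat)
    (B : {set n.+1.-tuple A}) (w : 'I_m -> n.-tuple A) (a b : 'I_m -> A) :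
  injective w -> (forall i, a i != b i) ->
  (forall i, [tuple of a i :: w i] \in B) ->
  (forall i, [tuple of b i :: w i] \in B) ->
  (#|[set behead_tuple t | t in B]| + m <= #|B|)%N.
Proof.
move=> w_inj ab_neq aB bB.
pose C := [set [tuple of a i :: w i] | i : 'I_m].
have w_eq c i j : [tuple of c :: w i] = [tuple of a j :: w j] -> i = j.
  by move=> /(congr1 (fun t => behead (val t))) /val_inj /w_inj.
have cardC : #|C| = m by rewrite card_imset ?card_ord //; move=> i j /w_eq.
have CB : C \subset B by apply/subsetP => _ /imsetP [i _ ->].
have behead_BC : [set behead_tuple t | t in B] \subset
                 [set behead_tuple t | t in B :\: C].
  apply/subsetP => _ /imsetP [t tB ->].
  have [/imsetP [i _ ->] | tC] := boolP (t \in C); last first.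
    by apply/imsetP; exists t; rewrite // inE tC.
  apply/imsetP; exists [tuple of b i :: w i]; last exact: val_inj.
  rewrite !inE bB andbT; apply/imsetP => -[j _ eq_ba].
  have eq_ij := w_eq _ _ _ eq_ba.
  by move: eq_ba (ab_neq i); rewrite -eq_ij => -[->]; rewrite eqxx.
have mB : (m <= #|B|)%N by rewrite -cardC subset_leq_card.
rewrite addnC -leq_subRL // -cardC -(setIidPr CB) -cardsD.
exact: leq_trans (subset_leq_card behead_BC) (leq_imset_card _ _).
Qed.

Section Words.
Variable A : finType.
Implicit Types (X : subshift_pred A) (x y : point A).

Lemma asboolP (P : Prop) : asbool P = true <-> P.
Proof. by rewrite /asbool; case: excluded_middle_informative. Qed.

Definition window x (i : int) (n : nat) : n.-tuple A :=
  [tuple x (i + (j : nat)%:Z) | j < n].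

Definition language X (n : nat) : {set n.-tuple A} := [set w | asbool (occurs X w)].

Lemma mem_language X n (w : n.-tuple A) :
  (w \in language X n) <-> exists x i, X x /\ w = window x i n.
Proof.
rewrite inE; split=> [/asboolP [x [Xx [i wE]]] | [x [i [Xx ->]]]].
  by exists x, i; split=> //; apply: eq_from_tnth => j; rewrite tnth_mktuple.
by apply/asboolP; exists x; split=> //; exists i => j; rewrite tnth_mktuple.
Qed.

Lemma window_predS x i n : window x (i - 1) n.+1 = [tuple of x (i - 1) :: window x i n].
Proof.
apply: eq_from_tnth => j.
case: (unliftP ord0 j) => [j'|] ->; rewrite ?tnthS ?tnth0 !tnth_mktuple /=.
  by congr x; rewrite /bump /=; lia.
by rewrite addr0.
Qed.

Lemma language_behead X n :
  language X n \subset [set behead_tuple t | t in language X n.+1].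
Proof.
apply/subsetP => _ /mem_language [x [i [Xx ->]]]; apply/imsetP.
exists (window x (i - 1) n.+1); first by apply/mem_language; exists x, (i - 1).
by apply: val_inj; rewrite window_predS.
Qed.

Definition tails_agree x y (p q : int) : Prop :=
  forall t : nat, x (p + t%:Z) = y (q + t%:Z).

Lemma window_tails_agree x y p q n : tails_agree x y p q -> window x p n = window y q n.
Proof. by move=> xy; apply: eq_from_tnth => j; rewrite !tnth_mktuple. Qed.

Lemma tails_agree_pred x y p q :
  tails_agree x y p q -> x (p - 1) = y (q - 1) -> tails_agree x y (p - 1) (q - 1).
Proof.
move=> xy eq_pred [|t]; first by rewrite !addr0.
by have := xy t; congr (x _ = y _); lia.
Qed.

Lemma diverging_tails x y :
  right_asymptotic x y -> ~ same_orbit x y ->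
  exists p q, tails_agree x y p q /\ x (p - 1) != y (q - 1).
Proof.
move=> [a [b xy]] not_orbit; apply: NNPP => no_divergence; apply: not_orbit.
have agree_d (d : nat) : tails_agree x y (a - d%:Z) (b - d%:Z).
  elim: d => [|d IHd]; first by move=> t; rewrite !subr0.
  have eq_pred : x (a - d%:Z - 1) = y (b - d%:Z - 1).
    by apply/eqP/negPn/negP => neq; apply: no_divergence; exists (a - d%:Z), (b - d%:Z).
  by move=> t; have := tails_agree_pred IHd eq_pred t; congr (x _ = y _); lia.
exists (a - b) => m; have -> : m = b + (m - b) by lia.
case: (m - b) => [t|t].
  by have := xy t; have -> : b + t%:Z + (a - b) = a + t%:Z by lia.
have := agree_d t.+1 0; rewrite NegzE !addr0 => <-.
by congr x; lia.
Qed.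

Lemma several_orbits_diverging_tails X x :
  class_has_several_orbits X x ->
  exists y p q, X y /\ tails_agree x y p q /\ x (p - 1) != y (q - 1).
Proof.
move=> [y [Xy [xy not_orbit]]].
by have [p [q]] := diverging_tails xy not_orbit; exists y, p, q.
Qed.

Lemma separating_window_length m (x : 'I_m -> point A) (p : 'I_m -> int) :
  (forall i j, i != j -> ~ right_asymptotic (x i) (x j)) ->
  exists N, injective (fun i => window (x i) (p i) N).
Proof.
move=> not_asymp.
have sep_pair i j : exists s : nat, i != j -> x i (p i + s%:Z) != x j (p j + s%:Z).
  have [_|ij] := eqVneq i j; first by exists 0%N.
  suff [s neq] : exists s : nat, x i (p i + s%:Z) != x j (p j + s%:Z) by exists s.
  apply: NNPP => all_eq; apply: (not_asymp i j ij); exists (p i), (p j) => s.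
  by apply/eqP/negPn/negP => neq; apply: all_eq; exists s.
have [t sep] := fin_all_exists (fun i => fin_all_exists (sep_pair i)).
pose N := (\max_(ij : 'I_m * 'I_m) t ij.1 ij.2).+1.
exists N => i j eq_w; apply/eqP; apply: contraT => ij.
have lt_t : (t i j < N)%N by exact: (leq_bigmax (F := fun ij : _ * _ => t ij.1 ij.2) (i, j)).
move: (sep i j ij) (congr1 (fun w => tnth w (Ordinal lt_t)) eq_w).
by rewrite !tnth_mktuple /= => /eqP.
Qed.

End Words.

Theorem mainTheorem4 (A : finType) (X : subshift_pred A) (k : nat) :
  is_shift_space X ->
  (forall n : nat, (complexity X n.+1 <= complexity X n + k)%N) ->
  forall (m : nat) (r : 'I_m -> point A),
    (forall i, X (r i) /\ class_has_several_orbits X (r i)) ->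
    (forall i j, i != j -> ~ right_asymptotic (r i) (r j)) ->
    (m <= k)%N.
Proof.
move=> _ growth m r rX not_asymp.
have [y /fin_all_exists [p /fin_all_exists [q branch]]] :=
  fin_all_exists (fun i => several_orbits_diverging_tails (rX i).2).
have [N w_inj] := separating_window_length p not_asymp.
have r_branch i : [tuple of r i (p i - 1) :: window (r i) (p i) N] \in language X N.+1.
  by rewrite -window_predS; apply/mem_language; exists (r i), (p i - 1); case: (rX i).
have y_branch i : [tuple of y i (q i - 1) :: window (r i) (p i) N] \in language X N.+1.
  have [Xy [agree _]] := branch i.
  by rewrite (window_tails_agree N agree) -window_predS; apply/mem_language; exists (y i), (q i - 1).
have := card_behead_add_left_special w_inj (fun i => (branch i).2.2) r_branch y_branch.
have := subset_leq_card (language_behead X N).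
move=> le_behead le_count; rewrite -(leq_add2l (complexity X N)).
by apply: leq_trans (growth N); apply: leq_trans le_count; rewrite leq_add2r.
Qed.
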